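(* Let $k$ be a number field with ring of integers $\mathcal{O}_k$. Let $\lambda_1,\dots,\lambda_r\in\mathcal{O}_k$ be distinct, let $n_1,\dots,n_r\ge1$ with $n=n_1+\dots+n_r$, for each $i$ let $J(\lambda_i)\in\mathrm{M}_{n_i}(k)$ be a Jordan canonical form with single eigenvalue $\lambda_i$, and let $M=\mathrm{diag}(J(\lambda_1),\dots,J(\lambda_r))$. Let $\mathfrak{s}$ be the set of sequences $\sigma=(\sigma_1,\dots,\sigma_n)$ that are permutations of the multiset in which each $\lambda_i$ appears $n_i$ times. Then for any $\sigma,\sigma'\in\mathfrak{s}$, there is an isomorphism of $k$-varieties $X_{M,\sigma,\mathrm{red}}\cong X_{M,\sigma',\mathrm{red}}$.
   Context: Let $T=(T_{i,j})_{1\le i,j\le n}$ be a matrix of indeterminates and $T^*$ its adjugate. For $\sigma\in\mathfrak{s}$, $X_{M,\sigma}$ is the closed subscheme of $\operatorname{Spec}k[T_{i,j},w]$ defined by $w\cdot\det(T)=1$, $(T^*MT)_{i,j}=0$ for $i>j$, and $(T^*MT)_{i,i}=\det(T)\cdot\sigma_i$ for all $i$. $X_{M,\sigma,\mathrm{red}}$ denotes its associated reduced scheme. *)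

From HB Require Import structures.
From mathcomp Require Import all_boot all_order all_algebra all_field.
From mathcomp Require Import multinomials.mpoly.
Set Implicit Arguments. Unset Strict Implicit. Unset Printing Implicit Defensive.
Import Order.TTheory GRing.Theory Num.Theory.
Local Open Scope ring_scope.

Definition algebraic_integer (k : fieldExtType rat) (x : k) : Prop :=
  exists p : {poly int}, p \is monic /\ root (map_poly intr p) x.

Definition jordan_form_single (k : fieldType) (m : nat) (lam : k) (J : 'M[k]_m) : Prop :=
  exists b : 'I_m -> bool, forall i j : 'I_m,
    J i j = (i == j)%:R * lam + ((val j == (val i).+1) && b i)%:R.

(* polynomial ring k[T_{i,j}, w] with (n*n).+1 variables *)
Definition Tvar (n : nat) (i j : 'I_n) : 'I_(n * n).+1 := lift ord_max (mxvec_index i j).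
Definition wvar (n : nat) : 'I_(n * n).+1 := ord_max.

Definition Tmx (k : fieldType) (n : nat) : 'M[{mpoly k[(n * n).+1]}]_n :=
  \matrix_(i, j) 'X_(Tvar i j).

Definition X_gens (k : fieldType) (n : nat) (M : 'M[k]_n) (sigma : 'I_n -> k)
  : seq {mpoly k[(n * n).+1]} :=
  let T := Tmx k n in
  let d := \det T in
  let A := \adj T *m map_mx (fun c => c%:MP) M *m T in
  ('X_(wvar n) * d - 1)
    :: [seq A ij.1 ij.2 | ij <- enum [set: 'I_n * 'I_n] & (val ij.2 < val ij.1)%N]
    ++ [seq A i i - d * (sigma i)%:MP | i <- enum 'I_n].

Definition in_ideal (k : fieldType) (N : nat) (gens : seq {mpoly k[N]}) (q : {mpoly k[N]}) : Prop :=
  exists c : 'I_(size gens) -> {mpoly k[N]}, q = \sum_(i < size gens) c i * gens`_i.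

Definition in_radical (k : fieldType) (N : nat) (gens : seq {mpoly k[N]}) (q : {mpoly k[N]}) : Prop :=
  exists m : nat, in_ideal gens (q ^+ m).

(* Isomorphism of the reduced affine k-schemes Spec k[x]/rad(I1) and
   Spec k[x]/rad(I2): k-algebra isomorphism of the reduced coordinate rings,
   given by polynomial substitutions f (X1 -> X2 pulls back via f) and g. *)
Definition reduced_affine_iso (k : fieldType) (N : nat) (gens1 gens2 : seq {mpoly k[N]}) : Prop :=
  exists f g : N.-tuple {mpoly k[N]},
    [/\ forall p, p \in gens2 -> in_radical gens1 (comp_mpoly f p),
        forall p, p \in gens1 -> in_radical gens2 (comp_mpoly g p),
        forall j : 'I_N, in_radical gens2 (comp_mpoly g (tnth f j) - 'X_j)
      & forall j : 'I_N, in_radical gens1 (comp_mpoly f (tnth g j) - 'X_j)].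

Definition in_frak_s (k : fieldType) (r : nat) (lam : 'I_r -> k) (ns : 'I_r -> nat)
  (sigma : 'I_(\sum_(i < r) ns i) -> k) : Prop :=
  perm_eq [seq sigma j | j <- enum 'I_(\sum_(i < r) ns i)]
          (flatten [seq nseq (ns i) (lam i) | i <- enum 'I_r]).
Arguments in_frak_s {k r} lam ns sigma.

(* X_{M,sigma} is the scheme of pairs (T, w = det(T)^-1) for which T^-1 M T is upper
   triangular with diagonal sigma.  As adjacent transpositions generate the symmetric group,
   it suffices to compare sigma with sigma' = sigma o (i i+1), and we may assume
   sigma_i <> sigma_i+1.  Put A = T^* M T and p = w A_(i,i+1) / (sigma_i+1 - sigma_i).
   Conjugating A by the transvection 1 + p E_(i,i+1) kills its (i, i+1) entry, so a further
   conjugation by the permutation matrix S of (i i+1) keeps it upper triangular and swaps the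
   diagonal entries i and i+1.  Hence the substitution T |-> T P, w |-> -w, with
   P = (1 + p E_(i,i+1)) S (1 + p E_(i,i+1)) of determinant -1, maps the ideal of X_{M,sigma'}
   into that of X_{M,sigma}, and the substitution built in the same way from sigma' is inverse
   to it modulo these ideals.  Nothing about M is used, and the isomorphism already holds
   before passing to the reduced schemes. *)

From HB Require Import structures.
From mathcomp Require Import all_boot all_order all_algebra all_field.
From mathcomp Require Import multinomials.mpoly.
From mathcomp Require Import ring zify fingroup perm.
Set Implicit Arguments. Unset Strict Implicit. Unset Printing Implicit Defensive.
Import GRing.Theory.
Local Open Scope ring_scope.

Definition eqmod (k : fieldType) (N : nat) (G : seq {mpoly k[N]}) (x y : {mpoly k[N]}) :=
  in_ideal G (x - y).

Notation "x = y %[mod G ]" := (eqmod G x y) : ring_scope.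

Section IdealArithmetic.
Variables (k : fieldType) (N : nat) (G : seq {mpoly k[N]}).
Local Notation I := (in_ideal G).

Lemma in_ideal0 : I 0.
Proof. by exists (fun _ => 0); rewrite big1 // => j _; rewrite mul0r. Qed.

Lemma in_idealD x y : I x -> I y -> I (x + y).
Proof.
move=> [c1 ->] [c2 ->]; exists (fun j => c1 j + c2 j).
by rewrite -big_split; apply: eq_bigr => j _; rewrite mulrDl.
Qed.

Lemma in_idealMl a x : I x -> I (a * x).
Proof.
move=> [c ->]; exists (fun j => a * c j).
by rewrite mulr_sumr; apply: eq_bigr => j _; rewrite mulrA.
Qed.

Lemma in_idealMr a x : I x -> I (x * a).
Proof. by rewrite mulrC; apply: in_idealMl. Qed.

Lemma in_idealN x : I x -> I (- x).
Proof. by rewrite -mulN1r; apply: in_idealMl. Qed.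

Lemma in_idealB x y : I x -> I y -> I (x - y).
Proof. by move=> Ix /in_idealN; apply: in_idealD. Qed.

Lemma in_ideal_gen x : x \in G -> I x.
Proof.
move=> xG; have ltx : (index x G < size G)%N by rewrite index_mem.
exists (fun j => (val j == index x G)%:R).
rewrite (bigD1 (Ordinal ltx)) //= eqxx mul1r nth_index // big1 ?addr0 //.
by move=> j; rewrite -val_eqE /= => /negPf ->; rewrite mul0r.
Qed.

Lemma in_ideal_sum (J : finType) (F : J -> {mpoly k[N]}) :
  (forall j, I (F j)) -> I (\sum_j F j).
Proof. by move=> IF; apply: (big_ind I in_ideal0 in_idealD) => j _; apply: IF. Qed.

Lemma in_ideal_radical x : I x -> in_radical G x.
Proof. by exists 1%N; rewrite expr1. Qed.

Lemma eqmod0 x : (x = 0 %[mod G]) = I x.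
Proof. by rewrite /eqmod subr0. Qed.

Lemma eqmod_refl x : x = x %[mod G].
Proof. by rewrite /eqmod subrr; apply: in_ideal0. Qed.

Lemma eqmod_trans y x z : x = y %[mod G] -> y = z %[mod G] -> x = z %[mod G].
Proof. by move=> Ixy Iyz; rewrite /eqmod -(subrKA y); apply: in_idealD. Qed.

Lemma eqmodD x y x' y' :
  x = x' %[mod G] -> y = y' %[mod G] -> x + y = x' + y' %[mod G].
Proof. by move=> Ix Iy; rewrite /eqmod opprD addrACA; apply: in_idealD. Qed.

Lemma eqmodN x x' : x = x' %[mod G] -> - x = - x' %[mod G].
Proof. by move=> Ix; rewrite /eqmod -opprD; apply: in_idealN. Qed.

Lemma eqmodB x y x' y' :
  x = x' %[mod G] -> y = y' %[mod G] -> x - y = x' - y' %[mod G].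
Proof. by move=> Ix /eqmodN; apply: eqmodD. Qed.

Lemma eqmodM x y x' y' :
  x = x' %[mod G] -> y = y' %[mod G] -> x * y = x' * y' %[mod G].
Proof.
move=> Ix Iy; rewrite /eqmod; have -> : x * y - x' * y' = x * (y - y') + (x - x') * y' by ring.
by apply: in_idealD; [apply: in_idealMl | apply: in_idealMr].
Qed.

Lemma eqmod_sum (J : finType) (F F' : J -> {mpoly k[N]}) :
  (forall j, F j = F' j %[mod G]) -> \sum_j F j = \sum_j F' j %[mod G].
Proof. by move=> IF; rewrite /eqmod -sumrB; apply: in_ideal_sum. Qed.

Lemma eqmod_prod (J : finType) (F F' : J -> {mpoly k[N]}) :
  (forall j, F j = F' j %[mod G]) -> \prod_j F j = \prod_j F' j %[mod G].
Proof.
move=> IF; apply: (big_ind2 (eqmod G) (eqmod_refl 1)) => [x x' y y'|j _].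
  exact: eqmodM.
exact: IF.
Qed.

Lemma eqmodX x x' m : x = x' %[mod G] -> x ^+ m = x' ^+ m %[mod G].
Proof.
move=> Ix; elim: m => [|m IHm]; first exact: eqmod_refl.
by rewrite !exprS; apply: eqmodM.
Qed.

Lemma eqmod_mulrI u v x y : u * v = 1 %[mod G] -> v * x = v * y -> x = y %[mod G].
Proof.
move=> uv1 vxy; rewrite /eqmod.
have -> : x - y = - ((u * v - 1) * (x - y)) + u * (v * x - v * y) by ring.
by rewrite vxy subrr mulr0 addr0; apply/in_idealN/in_idealMr.
Qed.

End IdealArithmetic.

Section Substitution.
Variables (k : fieldType) (N : nat).
Implicit Types (f g : N.-tuple {mpoly k[N]}) (p : {mpoly k[N]}) (G : seq {mpoly k[N]}).

Lemma comp_mpoly_X f j : comp_mpoly f 'X_j = tnth f j.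
Proof. by rewrite comp_mpolyXU -tnth_nth. Qed.

Lemma comp_mpolyA f g p :
  comp_mpoly f (comp_mpoly g p) = comp_mpoly [tuple comp_mpoly f (tnth g j) | j < N] p.
Proof.
rewrite [p]mpolyE [comp_mpoly g _]raddf_sum [comp_mpoly _ (\sum_(m <- _) _)]raddf_sum.
rewrite [RHS]raddf_sum; apply: eq_bigr => m _ /=.
rewrite !comp_mpolyZ !comp_mpolyX rmorph_prod; congr (_ *: _).
by apply: eq_bigr => i _; rewrite rmorphXn tnth_mktuple.
Qed.

Lemma eqmod_comp_mpoly G f g p :
  (forall j, tnth f j = tnth g j %[mod G]) -> comp_mpoly f p = comp_mpoly g p %[mod G].
Proof.
move=> fg; rewrite [p]mpolyE [comp_mpoly f _]raddf_sum [comp_mpoly g _]raddf_sum.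
apply: (big_ind2 (eqmod G)) => [|x x' y y'|m _]; [exact: eqmod_refl|exact: eqmodD|].
rewrite /= !comp_mpolyZ !comp_mpolyX -!mul_mpolyC.
by apply: eqmodM; [apply: eqmod_refl | apply: eqmod_prod => i; apply: eqmodX].
Qed.

Lemma in_ideal_comp_mpoly G1 G2 f q :
  (forall p, p \in G2 -> in_ideal G1 (comp_mpoly f p)) ->
  in_ideal G2 q -> in_ideal G1 (comp_mpoly f q).
Proof.
move=> fG [c ->]; rewrite raddf_sum; apply: in_ideal_sum => j.
by rewrite /= rmorphM; apply: in_idealMl; apply/fG/mem_nth.
Qed.

Definition quotient_iso G1 G2 : Prop :=
  exists f g : N.-tuple {mpoly k[N]},
    [/\ forall p, p \in G2 -> in_ideal G1 (comp_mpoly f p),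
        forall p, p \in G1 -> in_ideal G2 (comp_mpoly g p),
        forall j, comp_mpoly g (tnth f j) = 'X_j %[mod G2]
      & forall j, comp_mpoly f (tnth g j) = 'X_j %[mod G1]].

Lemma quotient_iso_refl G : quotient_iso G G.
Proof.
exists [tuple 'X_i | i < N], [tuple 'X_i | i < N].
split=> [p pG|p pG|j|j]; rewrite comp_mpoly_id ?tnth_mktuple //.
- exact: in_ideal_gen.
- exact: in_ideal_gen.
- exact: eqmod_refl.
- exact: eqmod_refl.
Qed.

Lemma comp_mpoly_inverse_trans G G' f g f' g' j :
  (forall p, p \in G -> in_ideal G' (comp_mpoly g' p)) ->
  (forall i, comp_mpoly g (tnth f i) = 'X_i %[mod G]) ->
  comp_mpoly g' (tnth f' j) = 'X_j %[mod G'] ->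
  comp_mpoly [tuple comp_mpoly g' (tnth g i) | i < N]
    (tnth [tuple comp_mpoly f (tnth f' i) | i < N] j) = 'X_j %[mod G'].
Proof.
move=> g'G gf g'f'; rewrite tnth_mktuple -!comp_mpolyA; apply: eqmod_trans g'f'.
rewrite /eqmod -raddfB; apply: in_ideal_comp_mpoly g'G _.
rewrite comp_mpolyA -[X in _ - X]comp_mpoly_id; apply: eqmod_comp_mpoly => i.
by rewrite !tnth_mktuple.
Qed.

Lemma quotient_iso_trans G1 G2 G3 :
  quotient_iso G1 G2 -> quotient_iso G2 G3 -> quotient_iso G1 G3.
Proof.
move=> [f1 [g1 [f1G g1G g1f1 f1g1]]] [f2 [g2 [f2G g2G g2f2 f2g2]]].
exists [tuple comp_mpoly f1 (tnth f2 j) | j < N], [tuple comp_mpoly g2 (tnth g1 j) | j < N].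
split=> [p /f2G|p /g1G|j|j].
- by rewrite -comp_mpolyA; apply: in_ideal_comp_mpoly.
- by rewrite -comp_mpolyA; apply: in_ideal_comp_mpoly.
- exact: comp_mpoly_inverse_trans g2G g1f1 (g2f2 j).
- exact: comp_mpoly_inverse_trans f1G f2g2 (f1g1 j).
Qed.

Lemma quotient_iso_reduced G1 G2 : quotient_iso G1 G2 -> reduced_affine_iso G1 G2.
Proof.
move=> [f [g [fG gG gf fg]]]; exists f, g.
split=> [p /fG /in_ideal_radical //|p /gG /in_ideal_radical //|j|j].
  by apply: in_ideal_radical; apply: gf.
by apply: in_ideal_radical; apply: fg.
Qed.

End Substitution.

Lemma det_scale_adj_conj (R : comRingType) n (T P P' X : 'M[R]_n) e :
  P *m P' = 1%:M -> \det P = e ->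
  \det T *: (\adj (T *m P) *m X *m (T *m P)) = (\det T * e) *: (P' *m (\adj T *m X *m T) *m P).
Proof.
move=> PP' <-; have adjTP : \det T *: \adj (T *m P) = (\det T * \det P) *: (P' *m \adj T).
  rewrite -mul_mx_scalar -mul_mx_adj -{2}[T]mulmx1 -PP'.
  by rewrite !mulmxA -[_ *m T *m P]mulmxA mul_adj_mx det_mulmx mul_scalar_mx scalemxAl.
by rewrite !scalemxAl adjTP -!scalemxAl !mulmxA.
Qed.

Section Transvections.
Variables (R : comRingType) (n : nat) (i j : 'I_n).
Implicit Types (x : R) (X : 'M[R]_n).

Definition transvection x : 'M[R]_n := 1%:M + x *: delta_mx i j.

Lemma transvectionB x y r s :
  transvection x r s - transvection y r s = (x - y) * ((r == i) && (s == j))%:R.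
Proof. by rewrite !mxE; ring. Qed.

Lemma mul_transvection_mx x X r s :
  (transvection x *m X) r s = X r s + x * (r == i)%:R * X j s.
Proof.
rewrite mulmxDl mul1mx -scalemxAl !mxE (bigD1 j) //= big1 => [|t /negPf ntj].
  by rewrite mxE eqxx andbT addr0 /=; ring.
by rewrite mxE ntj andbF mul0r.
Qed.

Lemma mul_mx_transvection x X r s :
  (X *m transvection x) r s = X r s + x * (s == j)%:R * X r i.
Proof.
rewrite mulmxDr mulmx1 -scalemxAr !mxE (bigD1 i) //= big1 => [|t /negPf nti].
  by rewrite mxE eqxx addr0 /=; ring.
by rewrite mxE nti mulr0.
Qed.

Lemma conj_transvection x X r s :
  (transvection (- x) *m X *m transvection x) r s =
  X r s - x * (r == i)%:R * X j s + x * (s == j)%:R * X r i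
  - x ^+ 2 * (r == i)%:R * (s == j)%:R * X j i.
Proof. by rewrite mul_mx_transvection !mul_transvection_mx; ring. Qed.

Lemma conj_tperm_mx X r s :
  (tperm_mx i j *m X *m tperm_mx i j) r s = X (tperm i j r) (tperm i j s).
Proof. by rewrite -xrowE -xcolE !mxE. Qed.

Definition flip_mx x : 'M[R]_n := transvection x *m tperm_mx i j *m transvection x.

Lemma conj_flip_mx x X :
  flip_mx (- x) *m X *m flip_mx x =
  transvection (- x)
    *m (tperm_mx i j *m (transvection (- x) *m X *m transvection x) *m tperm_mx i j)
    *m transvection x.
Proof. by rewrite /flip_mx !mulmxA. Qed.

Hypothesis lt_ij : (i < j)%N.

Let neq_ij : i != j.
Proof. by rewrite -val_eqE neq_ltn lt_ij. Qed.

Lemma transvectionKN x : transvection x *m transvection (- x) = 1%:M.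
Proof.
rewrite mulmxDl !mulmxDr !mul1mx mulmx1 -scalemxAl -scalemxAr.
rewrite mul_delta_mx_0; last by rewrite eq_sym neq_ij.
by rewrite !scaler0 addr0 scaleNr addrNK.
Qed.

Lemma det_transvection x : \det (transvection x) = 1.
Proof.
rewrite -det_tr det_trig; last apply/is_trig_mxP => r s lt_rs.
  rewrite big1 // => r _; rewrite !mxE eqxx.
  by case: eqP => [->|]; rewrite ?(negPf neq_ij) mulr0 addr0.
have /negPf sirj : ~~ ((s == i) && (r == j)).
  by apply/andP => -[/eqP si /eqP rj]; move: lt_rs; rewrite si rj ltnNge ltnW.
by rewrite !mxE sirj -val_eqE (gtn_eqF lt_rs) add0r mulr0.
Qed.

Lemma flip_mxKN x : flip_mx x *m flip_mx (- x) = 1%:M.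
Proof.
rewrite /flip_mx !mulmxA -[_ *m transvection x *m transvection (- x)]mulmxA.
rewrite transvectionKN mulmx1 -[_ *m tperm_mx i j *m tperm_mx i j]mulmxA -perm_mxM.
by rewrite tperm2 perm_mx1 mulmx1 transvectionKN.
Qed.

Lemma det_flip_mx x : \det (flip_mx x) = -1.
Proof. by rewrite !det_mulmx det_transvection det_perm odd_tperm neq_ij mul1r mulr1. Qed.

End Transvections.

Lemma map_flip_mx (R S : comRingType) (f : {rmorphism R -> S}) n (i j : 'I_n) x :
  map_mx f (flip_mx i j x) = flip_mx i j (f x).
Proof. by rewrite !map_mxM map_tperm_mx !(map_mxD, map_mxZ, map_delta_mx, map_mx1). Qed.

Lemma tperm_adjacent_lt n (i j r s : 'I_n) : j = i.+1 :> nat ->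
  (s < r)%N -> (r, s) <> (j, i) -> (tperm i j s < tperm i j r)%N.
Proof.
move=> adj_ij; have vneq (u v : 'I_n) : u <> v -> u <> v :> nat by move=> + /val_inj.
case: (tpermP i j r) => [->|->|/vneq ri /vneq rj];
case: (tpermP i j s) => [->|->|/vneq si /vneq sj] //; lia.
Qed.

Section UpperTriangularModIdeal.
Variables (k : fieldType) (N n : nat) (G : seq {mpoly k[N]}).
Local Notation R := {mpoly k[N]}.
Local Notation I := (in_ideal G).
Implicit Types (x : R) (X : 'M[R]_n).

Definition upper_mod X := forall r s : 'I_n, (s < r)%N -> I (X r s).

Lemma in_ideal_mulb y (b : bool) z : (b -> I z) -> I (y * b%:R * z).
Proof.
by case: b => Iz; rewrite ?mulr1 ?mulr0 ?mul0r; [apply/in_idealMl/Iz | apply: in_ideal0].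
Qed.

Lemma upper_mod_conj_tperm (i j : 'I_n) X : j = i.+1 :> nat ->
  upper_mod X -> I (X i j) -> upper_mod (tperm_mx i j *m X *m tperm_mx i j).
Proof.
move=> adj_ij upX Iij r s lt_sr; rewrite conj_tperm_mx.
have [[-> ->]|ne_rs_ji] := eqVneq (r, s) (j, i); first by rewrite tpermL tpermR.
by apply/upX/(tperm_adjacent_lt adj_ij)/eqP.
Qed.

Variables (i j : 'I_n).
Hypothesis lt_ij : (i < j)%N.

Lemma upper_mod_conj_transvection x X :
  upper_mod X -> upper_mod (transvection i j (- x) *m X *m transvection i j x).
Proof.
move=> upX r s lt_sr; rewrite conj_transvection.
apply: in_idealB; last by apply/in_idealMl/upX.
apply: in_idealD; first apply: in_idealB.
- exact: upX.
- by apply: in_ideal_mulb => /eqP er; apply: upX; apply: ltn_trans lt_ij; rewrite -er.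
- by apply: in_ideal_mulb => /eqP es; apply: upX; apply: ltn_trans lt_ij _; rewrite -es.
Qed.

Lemma diag_conj_transvection x X r :
  upper_mod X -> (transvection i j (- x) *m X *m transvection i j x) r r = X r r %[mod G].
Proof.
move=> upX; have Iji : I (X j i) by apply: upX.
rewrite conj_transvection /eqmod.
have -> : forall a b c e : R, a - b + c - e - a = - b + c - e by move=> *; ring.
apply: in_idealB; last exact: in_idealMl.
by apply: in_idealD; [apply: in_idealN|]; apply: in_ideal_mulb => /eqP ->.
Qed.

End UpperTriangularModIdeal.

Section MatrixCongruence.
Variables (k : fieldType) (N n : nat) (G : seq {mpoly k[N]}).
Implicit Types (X Y : 'M[{mpoly k[N]}]_n).

Lemma eqmod_mulmx X X' Y Y' :
  (forall r s, X r s = X' r s %[mod G]) -> (forall r s, Y r s = Y' r s %[mod G]) ->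
  forall r s, (X *m Y) r s = (X' *m Y') r s %[mod G].
Proof. by move=> XX' YY' r s; rewrite !mxE; apply: eqmod_sum => t; apply: eqmodM. Qed.

Lemma eqmod_flip_mx (i j : 'I_n) x y : x = y %[mod G] ->
  forall r s, flip_mx i j x r s = flip_mx i j y r s %[mod G].
Proof.
move=> xy; have tv r s : transvection i j x r s = transvection i j y r s %[mod G].
  by rewrite /eqmod transvectionB; apply: in_idealMr.
have perm_refl r s : tperm_mx i j r s = tperm_mx i j r s %[mod G] by apply: eqmod_refl.
exact: eqmod_mulmx (eqmod_mulmx tv perm_refl) tv.
Qed.

End MatrixCongruence.

Section AdjacentSwap.
Variables (k : fieldType) (N n : nat) (G : seq {mpoly k[N]}) (i j : 'I_n).
Hypothesis adj_ij : j = i.+1 :> nat.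
Local Notation R := {mpoly k[N]}.
Local Notation I := (in_ideal G).
Variables (A : 'M[R]_n) (d w c : R) (sd : 'I_n -> R).
Hypotheses (upA : upper_mod G A) (diagA : forall r, A r r = d * sd r %[mod G]).
Hypotheses (wd1 : w * d = 1 %[mod G]) (c_gap : c * (sd j - sd i) = 1).

Let lt_ij : (i < j)%N. Proof. by rewrite adj_ij. Qed.
Let p := c * w * A i j.
Let B := transvection i j (- p) *m A *m transvection i j p.
Let C := tperm_mx i j *m B *m tperm_mx i j.

Let swap_gap : p * (d * sd j) - p * (d * sd i) = A i j %[mod G].
Proof.
have -> : p * (d * sd j) - p * (d * sd i) = (c * (sd j - sd i)) * (w * d) * A i j.
  by rewrite /p; ring.
by rewrite c_gap mul1r -[X in _ = X %[mod G]]mul1r; apply/eqmodM/eqmod_refl.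
Qed.

Let upB : upper_mod G B. Proof. exact: (upper_mod_conj_transvection lt_ij p upA). Qed.

Let diagB r : B r r = d * sd r %[mod G].
Proof. exact/(eqmod_trans (diag_conj_transvection lt_ij _ _ upA))/diagA. Qed.

Let conj_transvection_ij (X : 'M[R]_n) a b :
  X j j = d * sd a %[mod G] -> X i i = d * sd b %[mod G] -> I (X j i) ->
  (transvection i j (- p) *m X *m transvection i j p) i j =
  X i j - (p * (d * sd a) - p * (d * sd b)) %[mod G].
Proof.
move=> Xjj Xii Xji; rewrite conj_transvection !eqxx /= !mulr1 /eqmod.
have -> : forall x y z e : R,
    x - p * y + p * z - p ^+ 2 * e - (x - (p * (d * sd a) - p * (d * sd b))) =
    p * (z - d * sd b) - p * (y - d * sd a) - p ^+ 2 * e by move=> *; ring.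
by apply: in_idealB; [apply: in_idealB|]; apply: in_idealMl.
Qed.

Let B_ij : I (B i j).
Proof.
rewrite -eqmod0; apply: eqmod_trans (conj_transvection_ij (diagA j) (diagA i) _) _.
  by apply: upA; rewrite adj_ij.
by rewrite -(subrr (A i j)); apply/eqmodB/swap_gap/eqmod_refl.
Qed.

Let C_entry r s : C r s = B (tperm i j r) (tperm i j s).
Proof. exact: conj_tperm_mx. Qed.

Let upC : upper_mod G C.
Proof. exact: (upper_mod_conj_tperm adj_ij upB B_ij). Qed.

Let Q_def :
  flip_mx i j (- p) *m A *m flip_mx i j p = transvection i j (- p) *m C *m transvection i j p.
Proof. exact: conj_flip_mx. Qed.

Lemma upper_mod_conj_flip : upper_mod G (flip_mx i j (- p) *m A *m flip_mx i j p).
Proof. by rewrite Q_def; apply: (upper_mod_conj_transvection lt_ij p upC). Qed.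

Lemma diag_conj_flip r :
  (flip_mx i j (- p) *m A *m flip_mx i j p) r r = d * sd (tperm i j r) %[mod G].
Proof.
rewrite Q_def; apply: eqmod_trans (diag_conj_transvection lt_ij _ _ upC) _.
by rewrite C_entry.
Qed.

Lemma conj_flip_ij : (flip_mx i j (- p) *m A *m flip_mx i j p) i j = A i j %[mod G].
Proof.
rewrite Q_def; apply: eqmod_trans (conj_transvection_ij _ _ _) _.
- by rewrite C_entry tpermR; apply: diagB.
- by rewrite C_entry tpermL; apply: diagB.
- by rewrite C_entry tpermR tpermL.
rewrite -[p * (d * sd i) - _]opprB opprK -[A i j]add0r; apply: eqmodD; last exact: swap_gap.
by rewrite eqmod0 C_entry tpermL tpermR; apply: upB; rewrite adj_ij.
Qed.

End AdjacentSwap.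

Section GenericConjugate.
Variables (k : fieldType) (n : nat) (M : 'M[k]_n).
Local Notation N := (n * n).+1.
Local Notation R := {mpoly k[N]}.
Local Notation T := (Tmx k n).
Local Notation d := (\det T).
Local Notation w := ('X_(wvar n) : R).

Definition Tconj : 'M[R]_n := \adj T *m map_mx (fun c => c%:MP) M *m T.

Lemma X_gens_ext sigma sigma' : sigma =1 sigma' -> X_gens M sigma = X_gens M sigma'.
Proof. by move=> ss'; congr (_ :: _ ++ _); apply: eq_map => r; rewrite ss'. Qed.

Lemma mem_X_gens sigma q : q \in X_gens M sigma ->
  [\/ q = w * d - 1,
      exists r s : 'I_n, (s < r)%N /\ q = Tconj r s
    | exists r, q = Tconj r r - d * (sigma r)%:MP].
Proof.
rewrite in_cons mem_cat => /orP[/eqP ->|/orP[]/mapP[x]]; first by constructor 1.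
  by rewrite mem_filter => /andP[lt_x _] ->; constructor 2; exists x.1, x.2.
by move=> _ ->; constructor 3; exists x.
Qed.

Variable sigma : 'I_n -> k.
Local Notation G := (X_gens M sigma).

Lemma X_gens_unit : w * d = 1 %[mod G].
Proof. exact/in_ideal_gen/mem_head. Qed.

Lemma upper_mod_Tconj : upper_mod G Tconj.
Proof.
move=> r s lt_sr; apply/in_ideal_gen; rewrite in_cons mem_cat; apply/orP; right.
by apply/orP; left; apply/mapP; exists (r, s); rewrite // mem_filter lt_sr mem_enum in_setT.
Qed.

Lemma diag_Tconj r : Tconj r r = d * (sigma r)%:MP %[mod G].
Proof.
apply/in_ideal_gen; rewrite in_cons mem_cat; apply/orP; right.
by apply/orP; right; apply/mapP; exists r; rewrite ?mem_enum.
Qed.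

Section SwapSubst.
Variables (i j : 'I_n).
Hypothesis lt_ij : (i < j)%N.

Definition swap_param (a b : k) : R := (b - a)^-1%:MP * w * Tconj i j.

(* T |-> T * flip_mx p and w |-> - w *)
Definition swap_subst (a b : k) : N.-tuple R :=
  [tuple match unlift ord_max v with
         | Some m => mxvec (T *m flip_mx i j (swap_param a b)) 0 m
         | None => - w
         end | v < N].

Lemma swap_subst_T a b r s :
  tnth (swap_subst a b) (Tvar r s) = (T *m flip_mx i j (swap_param a b)) r s.
Proof. by rewrite tnth_mktuple /Tvar liftK mxvecE. Qed.

Lemma swap_subst_w a b : tnth (swap_subst a b) (wvar n) = - w.
Proof. by rewrite tnth_mktuple unlift_none. Qed.

Section Substituted.
Variables a b : k.
Local Notation phi := (comp_mpoly (swap_subst a b)).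
Local Notation P := (flip_mx i j (swap_param a b)).

Lemma comp_Tmx : map_mx phi T = T *m P.
Proof. by apply/matrixP => r s; rewrite mxE /Tmx mxE comp_mpoly_X swap_subst_T. Qed.

Lemma comp_w : phi w = - w.
Proof. by rewrite comp_mpoly_X swap_subst_w. Qed.

Lemma comp_det : phi d = - d.
Proof. by rewrite -det_map_mx comp_Tmx det_mulmx det_flip_mx // mulrN1. Qed.

Lemma comp_Tconj : map_mx phi Tconj = \adj (T *m P) *m map_mx (fun c => c%:MP) M *m (T *m P).
Proof.
have phiM : map_mx phi (map_mx (fun c => c%:MP) M) = map_mx (fun c => c%:MP) M.
  by apply/matrixP => r s; rewrite !mxE /= comp_mpolyC.
by rewrite map_mxM map_mxM map_mx_adj comp_Tmx phiM.
Qed.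

(* Modulo w d = 1, the adjugate of T P is - P^-1 T^* since det P = -1. *)
Lemma comp_Tconj_eqmod r s :
  phi (Tconj r s) = - (flip_mx i j (- swap_param a b) *m Tconj *m P) r s %[mod G].
Proof.
apply: (eqmod_mulrI (u := w) (v := d)); first exact: X_gens_unit.
have E : d *: map_mx phi Tconj = - (d *: (flip_mx i j (- swap_param a b) *m Tconj *m P)).
  rewrite comp_Tconj.
  apply: etrans (det_scale_adj_conj _ _ (flip_mxKN lt_ij _) (det_flip_mx lt_ij _)) _.
  by rewrite mulrN1 scaleNr.
move/matrixP/(_ r s): E.
by rewrite mxE [in RHS]mxE [in RHS]mxE mxE mulrN.
Qed.

End Substituted.
End SwapSubst.

Section AdjacentSwapIso.
Variables (i j : 'I_n).
Hypothesis adj_ij : j = i.+1 :> nat.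
Hypothesis sigma_ij : sigma i != sigma j.

Let lt_ij : (i < j)%N. Proof. by rewrite adj_ij. Qed.
Local Notation phi := (comp_mpoly (swap_subst i j (sigma i) (sigma j))).
Local Notation p := (swap_param i j (sigma i) (sigma j)).
Local Notation sd := (fun r => (sigma r)%:MP : R).
Let c : R := (sigma j - sigma i)^-1%:MP.

Let c_gap : c * (sd j - sd i) = 1.
Proof. by rewrite -mpolyCB -mpolyCM mulVf ?mpolyC1 // subr_eq0 eq_sym. Qed.

Let upper_mod_Q := upper_mod_conj_flip adj_ij upper_mod_Tconj diag_Tconj X_gens_unit c_gap.
Let diag_Q := diag_conj_flip adj_ij upper_mod_Tconj diag_Tconj X_gens_unit c_gap.
Let Q_ij := conj_flip_ij adj_ij upper_mod_Tconj diag_Tconj X_gens_unit c_gap.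

Lemma swap_subst_gens q : q \in X_gens M (sigma \o tperm i j) -> in_ideal G (phi q).
Proof.
case/mem_X_gens => [->|[r [s [lt_sr ->]]]|[r ->]].
- by rewrite rmorphB rmorphM /= comp_w comp_det // rmorph1 mulrNN; apply: X_gens_unit.
- rewrite -eqmod0 -oppr0; apply: eqmod_trans (comp_Tconj_eqmod lt_ij _ _ r s) _.
  by apply: eqmodN; rewrite eqmod0; apply: upper_mod_Q.
rewrite rmorphB rmorphM /= comp_det // comp_mpolyC mulNr opprK -eqmod0.
rewrite -(addNr (d * sd (tperm i j r))).
apply: eqmodD; last exact: eqmod_refl.
apply: eqmod_trans (comp_Tconj_eqmod lt_ij _ _ r r) _.
exact/eqmodN/diag_Q.
Qed.

Lemma swap_substK v :
  phi (tnth (swap_subst i j (sigma j) (sigma i)) v) = 'X_v %[mod G].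
Proof.
case: (unliftP ord_max v) => [m ->|->]; last first.
  by rewrite (swap_subst_w i j (sigma j) (sigma i)) rmorphN /= comp_w opprK; apply: eqmod_refl.
case/mxvec_indexP: m => r s; rewrite (swap_subst_T i j (sigma j) (sigma i) r s).
have -> : phi ((T *m flip_mx i j (swap_param i j (sigma j) (sigma i))) r s) =
    map_mx phi (T *m flip_mx i j (swap_param i j (sigma j) (sigma i))) r s by rewrite [RHS]mxE.
rewrite map_mxM comp_Tmx map_flip_mx.
have -> : 'X_(lift ord_max (mxvec_index r s)) = (T *m flip_mx i j p *m flip_mx i j (- p)) r s.
  by rewrite -mulmxA flip_mxKN // mulmx1 mxE.
apply: eqmod_mulmx => [r' s'|]; first exact: eqmod_refl.
apply: eqmod_flip_mx.
rewrite /swap_param rmorphM rmorphM /= comp_mpolyC comp_w.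
apply: (@eqmod_trans _ _ _ ((sigma i - sigma j)^-1%:MP * - w * - Tconj i j)).
  apply: eqmodM; first exact: eqmod_refl.
  exact: eqmod_trans (comp_Tconj_eqmod lt_ij _ _ i j) (eqmodN Q_ij).
by rewrite -opprB invrN mpolyCN mulrNN mulrN; apply: eqmod_refl.
Qed.

End AdjacentSwapIso.
End GenericConjugate.

Lemma quotient_iso_swap (k : fieldType) n (M : 'M[k]_n) (sigma : 'I_n -> k) (i j : 'I_n) :
  j = i.+1 :> nat -> quotient_iso (X_gens M sigma) (X_gens M (sigma \o tperm i j)).
Proof.
move=> adj_ij; have [eq_ij|ne_ij] := eqVneq (sigma i) (sigma j).
  have -> : X_gens M (sigma \o tperm i j) = X_gens M sigma.
    by apply: X_gens_ext => r /=; case: tpermP => [->|->|//]; rewrite eq_ij.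
  exact: quotient_iso_refl.
pose sigma' := sigma \o tperm i j.
have sigma'K : sigma' \o tperm i j =1 sigma by move=> r; rewrite /sigma' /= tpermK.
have sigma'_i : sigma' i = sigma j by rewrite /sigma' /= tpermL.
have sigma'_j : sigma' j = sigma i by rewrite /sigma' /= tpermR.
have ne'_ij : sigma' i != sigma' j by rewrite sigma'_i sigma'_j eq_sym.
exists (swap_subst M i j (sigma i) (sigma j)), (swap_subst M i j (sigma j) (sigma i)); split.
- exact: swap_subst_gens.
- move=> q; rewrite -(X_gens_ext M sigma'K) => /(swap_subst_gens adj_ij ne'_ij).
  by rewrite sigma'_i sigma'_j.
- by move=> v; have := swap_substK M adj_ij ne'_ij v; rewrite sigma'_i sigma'_j.
- exact: swap_substK.
Qed.

Lemma tperm_adjacent_ind n (P : 'S_n -> Prop) :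
  (forall s t, P s -> P t -> P (s * t)%g) ->
  (forall i j : 'I_n, j = i.+1 :> nat -> P (tperm i j)) ->
  forall i j : 'I_n, (i < j)%N -> P (tperm i j).
Proof.
move=> PM Padj i j; have [m] := ubnP (val j); elim: m i j => // m IHm i j lt_jm lt_ij.
have [adj_ij|nadj_ij] := eqVneq (val j) i.+1; first exact: Padj.
have lt_j1n : (j.-1 < n)%N by rewrite (leq_ltn_trans (leq_pred j)).
pose h := Ordinal lt_j1n.
have lt_ih : (i < h)%N by move/eqP: nadj_ij; rewrite /= -subn1; lia.
have adj_hj : j = h.+1 :> nat by rewrite /= prednK // (leq_ltn_trans _ lt_ij).
have ne_hi : h != i by rewrite -val_eqE neq_ltn lt_ih orbT.
have ne_ji : j != i by rewrite -val_eqE neq_ltn lt_ij orbT.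
have -> : tperm i j = (tperm h j * tperm i h * tperm h j)%g.
  by rewrite -{1}(tpermV h j) -mulgA -conjgE tpermJ tpermL tpermD.
have P_ih : P (tperm i h) by apply: IHm lt_ih; rewrite -ltnS -adj_hj.
exact: PM _ _ (PM _ _ (Padj _ _ adj_hj) P_ih) (Padj _ _ adj_hj).
Qed.

Lemma perm_adjacent_ind n (P : 'S_n -> Prop) :
  P 1%g -> (forall s t, P s -> P t -> P (s * t)%g) ->
  (forall i j : 'I_n, j = i.+1 :> nat -> P (tperm i j)) -> forall s, P s.
Proof.
move=> P1 PM Padj s; have [ts -> _] := prod_tpermP s.
elim: ts => [|[i j] ts IHts]; first by rewrite big_nil.
have P_ij : P (tperm i j).
  have [lt_ij|lt_ji|/val_inj ->] := ltngtP i j; last by rewrite tperm1.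
    exact: tperm_adjacent_ind.
  by rewrite tpermC; apply: tperm_adjacent_ind.
by rewrite big_cons; apply: PM _ _ P_ij IHts.
Qed.

Lemma quotient_iso_perm (k : fieldType) n (M : 'M[k]_n) (sigma : 'I_n -> k) (s : 'S_n) :
  quotient_iso (X_gens M sigma) (X_gens M (sigma \o s)).
Proof.
elim/perm_adjacent_ind: s sigma => [|s t IHs IHt|i j adj_ij] sigma.
- have -> : X_gens M (sigma \o (1%g : 'S_n)) = X_gens M sigma.
    by apply: X_gens_ext => r; rewrite /= perm1.
  exact: quotient_iso_refl.
- have -> : X_gens M (sigma \o (s * t)%g) = X_gens M ((sigma \o t) \o s).
    by apply: X_gens_ext => r; rewrite /= permM.
  exact: quotient_iso_trans (IHt sigma) (IHs _).
- exact: quotient_iso_swap.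
Qed.

Lemma perm_eq_map_enum_ord (T : eqType) n (f g : 'I_n -> T) :
  perm_eq [seq g r | r <- enum 'I_n] [seq f r | r <- enum 'I_n] -> exists s : 'S_n, g =1 f \o s.
Proof.
move=> pe_gf.
have /tuple_permP[s gfs] : perm_eq [seq g r | r <- enum 'I_n] [tuple f r | r < n] by [].
exists s => r; have := congr1 (fun t => nth (g r) t r) gfs.
by rewrite (nth_map r) ?size_enum_ord // nth_ord_enum => ->; rewrite -tnth_nth !tnth_mktuple.
Qed.

Unset Implicit Arguments.

Theorem proposition4p3 (k : fieldExtType rat) (r : nat)
  (lam : 'I_r -> k) (ns : 'I_r -> nat)
  (J : forall i : 'I_r, 'M[k]_(ns i))
  (sigma sigma' : 'I_(\sum_(i < r) ns i) -> k) :
  (forall i, algebraic_integer (lam i)) ->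
  injective lam ->
  (forall i, (1 <= ns i)%N) ->
  (forall i, jordan_form_single (lam i) (J i)) ->
  in_frak_s lam ns sigma ->
  in_frak_s lam ns sigma' ->
  reduced_affine_iso (X_gens (\mxdiag_(i < r) J i) sigma)
                     (X_gens (\mxdiag_(i < r) J i) sigma').
Proof.
move=> _ _ _ _ frak_sigma frak_sigma'.
have [s sigma'E] : exists s : 'S_(\sum_(i < r) ns i), sigma' =1 sigma \o s.
  by apply: perm_eq_map_enum_ord; apply: perm_trans frak_sigma' _; rewrite perm_sym.
by apply: quotient_iso_reduced; rewrite (X_gens_ext _ sigma'E); apply: quotient_iso_perm.
Qed.
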